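(* For every integer $n\ge1$, $$\sup_{0\ne f\in\mathcal{T}_n}\frac{|f(0)|}{\|f\|_{L_2[0,1]}} \ge n.$$
   Context: For an integer $n\ge1$, $\mathcal{T}_n$ denotes the set of all functions $f:\mathbb{R}\to\mathbb{C}$ of the form $f(t)=\sum_{j=1}^n a_j e^{i\lambda_j t}$ with $a_j\in\mathbb{C}$ (possibly zero) and real exponents $\lambda_1<\lambda_2<\cdots<\lambda_n$. $\|f\|_{L_2[0,1]}=(\int_0^1|f|^2)^{1/2}$. *)

(* classical reals. Complex numbers are represented by pairs
   (real part, imaginary part) of reals. *)
From Stdlib Require Import Reals.
Open Scope R_scope.

Fixpoint rsum (n : nat) (g : nat -> R) : R :=
  match n with
  | O => 0
  | S k => rsum k g + g k
  end.

(* f(t) = sum_{j<n} a_j e^{i lam_j t}, with a_j = ar j + i ai j.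
   Real and imaginary parts of f(t): *)
Definition es_re (n : nat) (ar ai lam : nat -> R) (t : R) : R :=
  rsum n (fun j => ar j * cos (lam j * t) - ai j * sin (lam j * t)).
Definition es_im (n : nat) (ar ai lam : nat -> R) (t : R) : R :=
  rsum n (fun j => ar j * sin (lam j * t) + ai j * cos (lam j * t)).

Definition es_abs2 (n : nat) (ar ai lam : nat -> R) (t : R) : R :=
  (es_re n ar ai lam t)^2 + (es_im n ar ai lam t)^2.

Definition es_abs (n : nat) (ar ai lam : nat -> R) (t : R) : R :=
  sqrt (es_abs2 n ar ai lam t).

Definition strictly_incr (n : nat) (lam : nat -> R) : Prop :=
  forall i j : nat, (i < j)%nat -> (j < n)%nat -> lam i < lam j.

Definition es_nonzero (n : nat) (ar ai lam : nat -> R) : Prop :=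
  exists t : R, es_re n ar ai lam t <> 0 \/ es_im n ar ai lam t <> 0.

(* Let [p] be the polynomial of degree [< n] with [int_0^1 p(x) x^j dx = [j = 0]]
   for [j < n]; its coefficients [c_k] form the first column of the inverse of
   the Hilbert matrix, so [p(0) = int_0^1 p^2 = c_0 = n^2] and [|p(0)| / ||p|| = n].
   For [h > 0] the chord [u_h(t) = (e^{iht} - 1) / (ih)] turns [p(u_h(t))] into an
   exponential sum with exponents [0, h, ..., (n-1)h] and value [p(0)] at [t = 0];
   as [h -> 0], [u_h(t) -> t] uniformly on [[0,1]], so its norm tends to [n]. *)

From Stdlib Require Import Reals.
From mathcomp Require all_boot all_algebra.
From mathcomp Require Rstruct ring zify.

Module HilbertInverse.
Import all_boot all_algebra Rstruct ring zify.
Import GRing.Theory Num.Theory.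
Local Open Scope ring_scope.

Lemma size_prod_XsubC_pred (R : idomainType) (I : finType) (P : pred I) (a : I -> R) :
  size (\prod_(i | P i) ('X - (a i)%:P)) = (#|P|).+1.
Proof.
rewrite size_prod; last by move=> i _; rewrite polyXsubC_eq0.
under eq_bigr do rewrite size_XsubC.
rewrite sum_nat_const; lia.
Qed.

Section PartialFractions.
Variables (F : numFieldType) (n : nat).
Hypothesis n_gt0 : (0 < n)%N.

(* The first column [c] of the inverse of the Hilbert matrix [1/(j+k+1)] is
   read off the partial fraction decomposition
   [sum_k c_k / (x+k+1) = A * prod_{i=1}^{n-1} (x-i) / prod_{l=1}^{n} (x+l)],
   which vanishes at [x = 1, ..., n-1] and equals [1] at [x = 0]. *)
Definition hnum (x : F) : F := \prod_(i < n.-1) (x - i.+1%:R).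
Definition hweight (k : 'I_n) : F := \prod_(l < n | l != k) (l%:R - k%:R).
Definition hscale : F := (\prod_(l < n) l.+1%:R) / hnum 0.
Definition hcoef (k : 'I_n) : F := hscale * hnum (- k.+1%:R) / hweight k.

Lemma hweight_neq0 k : hweight k != 0.
Proof. by apply/prodf_neq0 => l hl; rewrite subr_eq0 eqr_nat. Qed.

Lemma hnum0_neq0 : hnum 0 != 0.
Proof. by apply/prodf_neq0 => i _; rewrite sub0r oppr_eq0 pnatr_eq0. Qed.

Lemma hnum_nat j : (0 < j < n)%N -> hnum j%:R = 0.
Proof.
move=> /andP[j_gt0 ltjn]; have ltj1 : (j.-1 < n.-1)%N by lia.
by rewrite /hnum (bigD1 (Ordinal ltj1)) //= prednK // subrr mul0r.
Qed.

Lemma hcoef_partial_fractions x :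
  \sum_(k < n) hcoef k * \prod_(l < n | l != k) (x + l.+1%:R) = hscale * hnum x.
Proof.
pose D : {poly F} :=
  \sum_(k < n) hcoef k *: \prod_(l < n | l != k) ('X - (- l.+1%:R)%:P)
  - hscale *: \prod_(i < n.-1) ('X - i.+1%:R%:P).
have D_horner y : D.[y] =
    \sum_(k < n) hcoef k * \prod_(l < n | l != k) (y + l.+1%:R) - hscale * hnum y.
  rewrite hornerD hornerN horner_sum hornerZ horner_prod.
  congr (_ - _ * _); last by apply: eq_bigr => i _; rewrite hornerXsubC.
  apply: eq_bigr => k _; rewrite hornerZ horner_prod; congr (_ * _).
  by apply: eq_bigr => l _; rewrite hornerXsubC opprK.
have D_size : (size D <= n)%N.
  apply: (leq_trans (size_polyD _ _)); rewrite geq_max; apply/andP; split.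
    apply: (leq_trans (size_sum _ _ _)); apply/bigmax_leqP => k _.
    apply: (leq_trans (size_scale_leq _ _)); rewrite size_prod_XsubC_pred.
    by rewrite (eq_card (B := predC1 k)) // cardC1 card_ord prednK.
  rewrite size_polyN; apply: (leq_trans (size_scale_leq _ _)).
  rewrite (_ : \prod_(i < n.-1) _ = \prod_(i < n.-1 | predT i) ('X - i.+1%:R%:P)) //.
  by rewrite size_prod_XsubC_pred cardT size_enum_ord prednK.
have D_root (j : 'I_n) : D.[- j.+1%:R] = 0.
  rewrite D_horner [X in X - _](bigD1 j) //= [\sum_(k < n | k != j) _]big1 ?addr0;
    last first.
    move=> k nkj.
    by rewrite (bigD1 j) 1?eq_sym //= addrC subrr mul0r mulr0.
  have -> : \prod_(l < n | l != j) (- j.+1%:R + l.+1%:R) = hweight j :> F.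
    by apply: eq_bigr => l _; rewrite -!natr1; ring.
  by rewrite /hcoef divfK ?hweight_neq0 // subrr.
have D_eq0 : D = 0.
  apply: (roots_geq_poly_eq0 (rs := [seq - j.+1%:R | j : 'I_n])).
  - by apply/allP => _ /mapP [j _ ->]; apply/rootP; apply: D_root.
  - rewrite map_inj_uniq ?enum_uniq // => a b /eqP.
    by rewrite eqr_opp eqr_nat eqSS => /eqP /val_inj.
  - by rewrite size_map size_enum_ord.
by apply/eqP; rewrite -subr_eq0 -D_horner D_eq0 horner0.
Qed.

Lemma hcoef_hilbert j : (j < n)%N ->
  \sum_(k < n) hcoef k / (j + k + 1)%:R = (j == 0)%:R.
Proof.
move=> ltjn.
have pos_neq0 (l : nat) : j%:R + l.+1%:R != 0 :> F by rewrite -natrD pnatr_eq0 addnS.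
have -> : \sum_(k < n) hcoef k / (j + k + 1)%:R =
    (\sum_(k < n) hcoef k * \prod_(l < n | l != k) (j%:R + l.+1%:R))
    / \prod_(l < n) (j%:R + l.+1%:R).
  rewrite mulr_suml; apply: eq_bigr => k _; rewrite [X in _ = _ / X](bigD1 k) //=.
  have Q_neq0 : \prod_(l < n | l != k) (j%:R + l.+1%:R) != 0 :> F by exact/prodf_neq0.
  by rewrite addn1 -addnS natrD; field; rewrite nat1r Q_neq0 pos_neq0.
rewrite hcoef_partial_fractions.
case: j ltjn pos_neq0 => [|j] ltjn pos_neq0; last by rewrite hnum_nat // mulr0 mul0r.
rewrite /hscale mulfVK ?hnum0_neq0 //.
under [X in _ / X]eq_bigr do rewrite add0r.
by rewrite mulfV //; apply/prodf_neq0 => l _; rewrite pnatr_eq0.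
Qed.

End PartialFractions.

Lemma hcoef0 (F : numFieldType) (m : nat) : @hcoef F m.+1 ord0 = m.+1%:R ^+ 2.
Proof.
set Q := \prod_(i < m) i.+1%:R : F.
set s := \prod_(i < m) (-1) : F.
have Q_neq0 : Q != 0 by apply/prodf_neq0 => i _; rewrite pnatr_eq0.
have s_neq0 : s != 0 by apply/prodf_neq0 => i _; rewrite oppr_eq0 oner_eq0.
have fact_rec : \prod_(l < m.+1) l.+1%:R = Q * m.+1%:R :> F by rewrite big_ord_recr.
have fact_shift : \prod_(i < m) i.+2%:R = Q * m.+1%:R :> F.
  by rewrite -fact_rec big_ord_recl mul1r.
have hnum_0 : hnum F m.+1 0 = s * Q.
  by rewrite /hnum -big_split; apply: eq_bigr => i _ /=; rewrite sub0r mulN1r.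
have hnum_1 : hnum F m.+1 (- 1%:R) = s * (Q * m.+1%:R).
  rewrite -fact_shift /hnum -big_split.
  by apply: eq_bigr => i _ /=; rewrite mulN1r -[i.+2%:R]natr1 opprD addrC.
have hweight_0 : @hweight F m.+1 ord0 = Q.
  rewrite /hweight big_mkcond big_ord_recl /= mul1r.
  by apply: eq_bigr => i _; rewrite subr0.
rewrite /hcoef /hscale hnum_0 hnum_1 hweight_0 fact_rec.
by field; rewrite s_neq0 Q_neq0.
Qed.

Lemma rsum_big n g : rsum n g = \sum_(i < n) g i.
Proof. by elim: n => [|n IH]; rewrite ?big_ord0 // big_ord_recr /= IH. Qed.

Local Close Scope ring_scope.
Local Open Scope R_scope.

Lemma hilbert_first_column (n : nat) : (0 < n)%coq_nat -> exists c : nat -> R,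
  c O = INR n ^ 2 /\ forall j, (j < n)%coq_nat ->
    rsum n (fun k => c k / INR (j + k + 1)) = if Nat.eqb j 0 then 1 else 0.
Proof.
case: n => [|m] /ltP // _.
exists (fun k => @hcoef R m.+1 (inord k)); split.
  have -> : inord 0 = ord0 :> 'I_m.+1 by apply: val_inj; rewrite /= inordK.
  by rewrite hcoef0 INRE -RpowE.
move=> j /ltP ltjm; rewrite rsum_big.
rewrite (_ : (if Nat.eqb j 0 then 1 else 0) = ((j == 0%N)%:R)%R); last by case: j {ltjm}.
rewrite -(hcoef_hilbert R m.+1 isT j ltjm); apply: eq_bigr => k _.
by rewrite inord_val INRE.
Qed.
End HilbertInverse.

From Stdlib Require Import Lra Lia.
From Coquelicot Require Import Coquelicot.
Open Scope R_scope.

Lemma rsum_ext m f g : (forall j, (j < m)%nat -> f j = g j) -> rsum m f = rsum m g.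
Proof.
induction m as [|m IH]; intros H; simpl; auto.
rewrite IH by (intros; apply H; lia). rewrite H by lia. reflexivity.
Qed.

Lemma rsum_add m f g : rsum m (fun j => f j + g j) = rsum m f + rsum m g.
Proof. induction m as [|m IH]; simpl; [ring | rewrite IH; ring]. Qed.

Lemma rsum_sub m f g : rsum m (fun j => f j - g j) = rsum m f - rsum m g.
Proof. induction m as [|m IH]; simpl; [ring | rewrite IH; ring]. Qed.

Lemma rsum_opp m f : rsum m (fun j => - f j) = - rsum m f.
Proof. induction m as [|m IH]; simpl; [ring | rewrite IH; ring]. Qed.

Lemma rsum_scal m a f : rsum m (fun j => a * f j) = a * rsum m f.
Proof. induction m as [|m IH]; simpl; [ring | rewrite IH; ring]. Qed.

Lemma rsum_shift m f : rsum (S m) f = f 0%nat + rsum m (fun j => f (S j)).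
Proof. induction m as [|m IH]; simpl in *; [ring | rewrite IH; ring]. Qed.

Lemma rsum_zero m f : (forall j, (j < m)%nat -> f j = 0) -> rsum m f = 0.
Proof.
induction m as [|m IH]; intros H; simpl; [reflexivity |].
rewrite IH by (intros; apply H; lia). rewrite H by lia. ring.
Qed.

Lemma rsum_mul m f g :
  rsum m f * rsum m g = rsum m (fun j => rsum m (fun k => f j * g k)).
Proof.
rewrite Rmult_comm, <- rsum_scal.
apply rsum_ext; intros j _. rewrite Rmult_comm, <- rsum_scal. reflexivity.
Qed.

Fixpoint hornerR (m : nat) (c : nat -> R) (x : R) : R :=
  match m with
  | O => 0
  | S m' => c 0%nat + x * hornerR m' (fun k => c (S k)) x
  end.

Lemma hornerR_sum m c x : hornerR m c x = rsum m (fun k => c k * x ^ k).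
Proof.
revert c; induction m as [|m IH]; intros c; simpl hornerR; auto.
rewrite rsum_shift, IH, <- rsum_scal. simpl. f_equal; [ring |].
apply rsum_ext; intros; ring.
Qed.

Lemma hornerR_0 m c : (0 < m)%nat -> hornerR m c 0 = c 0%nat.
Proof. intros H; destruct m; [lia |]. simpl; ring. Qed.

Lemma is_RInt_pow m : is_RInt (fun x => x ^ m) 0 1 (/ INR (m + 1)).
Proof.
assert (Hm : INR (m + 1) <> 0) by (rewrite plus_INR; simpl; pose proof (pos_INR m); lra).
replace (/ INR (m + 1)) with (minus (1 ^ (m + 1) / INR (m + 1)) (0 ^ (m + 1) / INR (m + 1))).
2:{ rewrite pow1, pow_i by lia. unfold minus, plus, opp; simpl. field; auto. }
apply (is_RInt_derive (fun x => x ^ (m + 1) / INR (m + 1))).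
- intros x _. auto_derive; auto. replace (Init.Nat.pred (m + 1)) with m by lia. field; auto.
- intros x _. apply (@ex_derive_continuous R_AbsRing R_NormedModule (fun y => y ^ m)).
  auto_derive; auto.
Qed.

Lemma is_RInt_rsum m (f : nat -> R -> R) (I : nat -> R) a b :
  (forall k, (k < m)%nat -> is_RInt (f k) a b (I k)) ->
  is_RInt (fun x => rsum m (fun k => f k x)) a b (rsum m I).
Proof.
induction m as [|m IH]; intros H; simpl.
- pose proof (@is_RInt_const R_NormedModule a b 0) as K.
  replace (scal (b - a) (0 : R_NormedModule)) with 0 in K
    by (unfold scal; simpl; unfold mult; simpl; ring).
  exact K.
- apply (is_RInt_plus (fun x => rsum m (fun k => f k x)) (f m)).
  + apply IH; intros; apply H; lia.
  + apply H; lia.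
Qed.

(* If [c] solves the Hilbert system, expanding the square gives
   [int_0^1 p^2 = sum_j c_j sum_k c_k / (j+k+1) = c_0]. *)
Lemma is_RInt_hornerR_sq n c :
  (0 < n)%nat ->
  (forall j, (j < n)%nat ->
     rsum n (fun k => c k / INR (j + k + 1)) = if Nat.eqb j 0 then 1 else 0) ->
  is_RInt (fun x => hornerR n c x ^ 2) 0 1 (c 0%nat).
Proof.
intros Hn Hc.
apply (is_RInt_ext (fun x => rsum n (fun j => rsum n (fun k => c j * c k * x ^ (j + k))))).
{ intros x _. rewrite hornerR_sum, <- Rsqr_pow2; unfold Rsqr. rewrite rsum_mul.
  apply rsum_ext; intros j _; apply rsum_ext; intros k _. rewrite pow_add. ring. }
replace (c 0%nat) with (rsum n (fun j => rsum n (fun k => c j * c k * / INR (j + k + 1)))).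
- apply is_RInt_rsum; intros j _. apply is_RInt_rsum; intros k _.
  apply (is_RInt_scal (fun x => x ^ (j + k))), is_RInt_pow.
- destruct n as [|n]; [lia |].
  rewrite (rsum_ext _ _ (fun j => if Nat.eqb j 0 then c j else 0)), rsum_shift.
  + rewrite rsum_zero by reflexivity. simpl; ring.
  + intros j Hj. transitivity (c j * rsum (S n) (fun k => c k / INR (j + k + 1))).
    * rewrite <- rsum_scal. apply rsum_ext; intros; unfold Rdiv; ring.
    * rewrite Hc by exact Hj. destruct (Nat.eqb j 0); ring.
Qed.

Open Scope C_scope.

Fixpoint hornerC (m : nat) (c : nat -> R) (w : C) : C :=
  match m with
  | O => 0
  | S m' => c 0%nat + w * hornerC m' (fun k => c (S k)) w
  end.

Lemma hornerC_real m c (x : R) : hornerC m c x = hornerR m c x.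
Proof.
revert c; induction m as [|m IH]; intros c; simpl; auto.
rewrite IH. unfold Cplus, Cmult, RtoC; simpl. f_equal; ring.
Qed.

Lemma hornerC_bounded_lipschitz m c : exists L B, (0 <= L)%R /\ (0 <= B)%R /\
  forall w z, (Cmod w <= 1)%R -> (Cmod z <= 1)%R ->
    (Cmod (hornerC m c w - hornerC m c z) <= L * Cmod (w - z))%R /\
    (Cmod (hornerC m c w) <= B)%R.
Proof.
revert c; induction m as [|m IH]; intros c.
- exists 0%R, 0%R; split; [lra | split; [lra |]]; intros w z _ _; simpl.
  replace (0 - 0) with (RtoC 0) by (unfold Cminus, Cplus, Copp, RtoC; simpl; f_equal; ring).
  rewrite Cmod_0; split; [pose proof (Cmod_ge_0 (w - z)) |]; nra.
- destruct (IH (fun k => c (S k))) as [L [B [HL [HB H]]]].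
  exists (L + B)%R, (Rabs (c 0%nat) + B)%R.
  split; [lra | split; [pose proof (Rabs_pos (c 0%nat)); lra |]].
  intros w z Hw Hz; simpl hornerC.
  destruct (H w z Hw Hz) as [Hlip _]; destruct (H z w Hz Hw) as [_ Hbz]; destruct (H w z Hw Hz) as [_ Hbw].
  set (pw := hornerC m (fun k => c (S k)) w) in *.
  set (pz := hornerC m (fun k => c (S k)) z) in *.
  pose proof (Cmod_ge_0 w); pose proof (Cmod_ge_0 (w - z)); pose proof (Cmod_ge_0 (pw - pz)).
  split.
  + replace (c 0%nat + w * pw - (c 0%nat + z * pz)) with (w * (pw - pz) + (w - z) * pz)
      by (destruct w, z, pw, pz; unfold Cminus, Cplus, Cmult, Copp, RtoC; simpl; f_equal; ring).
    eapply Rle_trans; [apply Cmod_triangle |]. rewrite !Cmod_mult. nra.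
  + eapply Rle_trans; [apply Cmod_triangle |]. rewrite Cmod_mult, Cmod_R. nra.
Qed.

Definition expsum (m : nat) (a : nat -> C) (lam : nat -> R) (t : R) : C :=
  (es_re m (fun j => fst (a j)) (fun j => snd (a j)) lam t,
   es_im m (fun j => fst (a j)) (fun j => snd (a j)) lam t).

Lemma Cmod_sq (z : C) : (Cmod z ^ 2 = fst z ^ 2 + snd z ^ 2)%R.
Proof. unfold Cmod. rewrite pow2_sqrt; [reflexivity | nra]. Qed.

Lemma es_abs2_expsum m a lam t :
  es_abs2 m (fun j => fst (a j)) (fun j => snd (a j)) lam t = (Cmod (expsum m a lam t) ^ 2)%R.
Proof. rewrite Cmod_sq. reflexivity. Qed.

Section ExpsumLinear.
Variables (m : nat) (lam : nat -> R) (t : R).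

Lemma expsum_add (a b : nat -> C) :
  expsum m (fun j => a j + b j) lam t = expsum m a lam t + expsum m b lam t.
Proof.
unfold expsum, es_re, es_im, Cplus; simpl.
f_equal; rewrite <- rsum_add; apply rsum_ext; intros; simpl; ring.
Qed.

Lemma expsum_sub (a b : nat -> C) :
  expsum m (fun j => a j - b j) lam t = expsum m a lam t - expsum m b lam t.
Proof.
unfold expsum, es_re, es_im, Cminus, Cplus, Copp; simpl.
f_equal; rewrite <- rsum_opp, <- rsum_add; apply rsum_ext; intros; simpl; ring.
Qed.

Lemma expsum_scal (k : C) (a : nat -> C) :
  expsum m (fun j => k * a j) lam t = k * expsum m a lam t.
Proof.
destruct k as [kr ki]; unfold expsum, es_re, es_im, Cmult; simpl.
f_equal; rewrite <- !rsum_scal, <- ?rsum_sub, <- ?rsum_add; apply rsum_ext; intros; simpl; ring.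
Qed.

Lemma expsum_zero : expsum m (fun _ => 0) lam t = 0.
Proof.
unfold expsum, es_re, es_im; simpl.
rewrite !rsum_zero by (intros; simpl; ring). reflexivity.
Qed.

Lemma expsum_last (a : nat -> C) : a m = 0 -> expsum (S m) a lam t = expsum m a lam t.
Proof. intros H. unfold expsum, es_re, es_im; simpl. rewrite H; simpl. f_equal; ring. Qed.

Lemma expsum_delta0 (k : C) : (0 < m)%nat -> lam 0%nat = 0%R ->
  expsum m (fun j => if Nat.eqb j 0 then k else 0) lam t = k.
Proof.
intros Hm H0. destruct m as [|m']; [lia |]. destruct k as [kr ki].
unfold expsum, es_re, es_im. rewrite !rsum_shift, !rsum_zero by (intros; simpl; ring).
simpl; rewrite H0, Rmult_0_l, cos_0, sin_0. f_equal; ring.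
Qed.

End ExpsumLinear.

Definition shiftC (a : nat -> C) (j : nat) : C :=
  match j with O => 0 | S k => a k end.

Lemma expsum_shift m (a : nat -> C) lam d t : (forall j, lam (S j) = lam j + d)%R ->
  expsum (S m) (shiftC a) lam t = (cos (d * t), sin (d * t)) * expsum m a lam t.
Proof.
intros Hlam. unfold expsum, es_re, es_im, Cmult. rewrite !rsum_shift. simpl.
rewrite <- !rsum_scal, <- rsum_sub, <- rsum_add.
f_equal; rewrite !Rmult_0_l, ?Rminus_0_r, !Rplus_0_l; apply rsum_ext;
  intros j _; rewrite Hlam, Rmult_plus_distr_r, cos_plus, sin_plus; ring.
Qed.

Definition lam_step (h : R) (j : nat) : R := (INR j * h)%R.

Section DifferenceQuotient.
Variable h : R.

Definition expdq (t : R) : C := (sin (h * t) / h, (1 - cos (h * t)) / h)%R.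

(* [expdq_coef m c] are the coefficients of [hornerC m c (expdq t)] as an
   exponential sum with exponents [j h]: by Horner's rule, multiplication by
   [expdq t = (e^{iht} - 1) / (ih)] shifts the coefficients, subtracts the
   old ones and divides by [ih], i.e. multiplies by [(0, -1/h)]. *)
Fixpoint expdq_coef (m : nat) (c : nat -> R) : nat -> C :=
  match m with
  | O => fun _ => 0
  | S m' => fun j =>
     let b := expdq_coef m' (fun k => c (S k)) in
     (if Nat.eqb j 0 then RtoC (c 0%nat) else 0) + (0, - / h)%R * (shiftC b j - b j)
  end.

Lemma expdq_coef_out m c j : (m <= j)%nat -> expdq_coef m c j = 0.
Proof.
revert c j; induction m as [|m IH]; intros c j Hj; simpl; auto.
destruct j as [|j]; [lia |]. simpl.
rewrite !IH by lia. unfold Cminus, Cplus, Cmult, Copp, RtoC; simpl. f_equal; ring.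
Qed.

Lemma expdq_0 : expdq 0 = 0.
Proof. unfold expdq. rewrite Rmult_0_r, sin_0, cos_0. unfold RtoC; f_equal; unfold Rdiv; ring. Qed.

Hypothesis h_neq0 : h <> 0%R.

Lemma expsum_expdq_coef m c t :
  expsum m (expdq_coef m c) (lam_step h) t = hornerC m c (expdq t).
Proof.
revert c; induction m as [|m IH]; intros c; [apply expsum_zero |].
simpl hornerC; rewrite <- IH; cbn [expdq_coef].
rewrite expsum_add, expsum_delta0, expsum_scal, expsum_sub, (expsum_shift _ _ _ h),
  expsum_last; [| apply expdq_coef_out; lia | intros; unfold lam_step; rewrite S_INR; ring
   | lia | unfold lam_step; simpl; ring].
destruct (expsum m _ _ t) as [x y].
unfold expdq, Cminus, Cplus, Cmult, Copp, RtoC; simpl. f_equal; field; auto.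
Qed.

End DifferenceQuotient.

Close Scope C_scope.

Lemma sin_cos_taylor_bounds x : 0 <= x <= 1 ->
  x - x ^ 3 / 6 <= sin x <= x /\ 1 - x ^ 2 / 2 <= cos x <= 1.
Proof.
intros Hx.
pose proof PI2_3_2; pose proof PI_RGT_0.
pose proof (sin_bound x 0 ltac:(lra) ltac:(lra)) as Hsin.
pose proof (cos_bound x 0 ltac:(unfold Rdiv; lra) ltac:(lra)) as Hcos.
unfold sin_approx, cos_approx, sin_term, cos_term in *; simpl in Hsin, Hcos.
split; split; try lra.
- destruct (Req_dec x 0) as [-> | Hx0]; [rewrite sin_0; lra |].
  pose proof (sin_lt_x x ltac:(lra)); lra.
- pose proof (COS_bound x); lra.
Qed.

Lemma expdq_bounds h t : 0 < h <= 1 -> 0 <= t <= 1 ->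
  Cmod (expdq h t) <= 1 /\ Cmod (expdq h t - RtoC t)%C <= 2 * h.
Proof.
intros Hh Ht.
assert (Hht : 0 <= h * t <= 1) by nra.
destruct (sin_cos_taylor_bounds (h * t) Hht) as [[S1 S2] [C1 C2]].
pose proof (sin2_cos2 (h * t)) as SC; unfold Rsqr in SC.
set (s := sin (h * t)) in *; set (c := cos (h * t)) in *.
set (X := s / h); set (Y := (1 - c) / h).
assert (EX : s = X * h) by (unfold X; field; lra).
assert (EY : 1 - c = Y * h) by (unfold Y; field; lra).
unfold expdq, Cmod, Cminus, Cplus, Copp, RtoC; simpl fst; simpl snd; fold s c X Y.
split.
- rewrite <- sqrt_1; apply sqrt_le_1_alt.
  assert (H2 : (X ^ 2 + Y ^ 2) * h ^ 2 <= h ^ 2 * t ^ 2).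
  { replace ((X ^ 2 + Y ^ 2) * h ^ 2) with ((X * h) ^ 2 + (Y * h) ^ 2) by ring.
    rewrite <- EX, <- EY. nra. }
  assert (X ^ 2 + Y ^ 2 <= t ^ 2) by (apply Rmult_le_reg_r with (h ^ 2); nra).
  nra.
- replace (2 * h) with (sqrt ((2 * h) ^ 2)) by (rewrite sqrt_pow2; lra).
  apply sqrt_le_1_alt.
  assert (Ht3 : h * t ^ 3 <= 1) by (assert (t * t <= 1) by nra; simpl; nra).
  assert (A1 : Rabs (X - t) * h <= h * h).
  { rewrite <- (Rabs_right h) at 1 by lra. rewrite <- Rabs_mult.
    replace ((X - t) * h) with (s - h * t) by (rewrite EX; ring).
    apply Rabs_le; split; nra. }
  assert (A2 : Rabs (X - t) <= h) by (apply Rmult_le_reg_r with h; lra).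
  assert (A3 : 0 <= Y <= h).
  { assert (t * t <= 1) by nra.
    split; apply Rmult_le_reg_r with h; nra. }
  replace (X + - t) with (X - t) by ring. rewrite <- pow2_abs.
  pose proof (Rabs_pos (X - t)). nra.
Qed.

Lemma Cmod_sq_sub_le (w z : C) :
  Rabs (Cmod w ^ 2 - Cmod z ^ 2) <= Cmod (w - z)%C * (Cmod w + Cmod z).
Proof.
assert (Hw : Cmod w <= Cmod (w - z)%C + Cmod z).
{ replace w with (w - z + z)%C at 1 by (destruct w, z; unfold Cminus, Cplus, Copp; simpl; f_equal; ring).
  apply Cmod_triangle. }
assert (Hz : Cmod z <= Cmod (w - z)%C + Cmod w).
{ replace z with (- (w - z) + w)%C at 1 by (destruct w, z; unfold Cminus, Cplus, Copp; simpl; f_equal; ring).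
  rewrite <- (Cmod_opp (w - z)). apply Cmod_triangle. }
pose proof (Cmod_ge_0 w); pose proof (Cmod_ge_0 z).
replace (Cmod w ^ 2 - Cmod z ^ 2) with ((Cmod w - Cmod z) * (Cmod w + Cmod z)) by ring.
rewrite Rabs_mult, (Rabs_right (Cmod w + Cmod z)) by lra.
apply Rmult_le_compat_r; [lra |]. apply Rabs_le; lra.
Qed.

Lemma Cmod_expsum_expdq_coef_approx n c eta : 0 < eta ->
  exists h, 0 < h /\ forall t, 0 <= t <= 1 ->
    Rabs (Cmod (expsum n (expdq_coef h n c) (lam_step h) t) ^ 2 - hornerR n c t ^ 2) <= eta.
Proof.
intros Heta.
destruct (hornerC_bounded_lipschitz n c) as [L [B [HL [HB Hlip]]]].
set (h := Rmin 1 (eta / (4 * L * B + 1))).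
assert (HLB : 0 <= 4 * L * B) by nra.
assert (Hh : 0 < h <= 1).
{ split; [apply Rmin_pos; [lra | apply Rdiv_lt_0_compat; lra] | apply Rmin_l]. }
assert (Hh_eta : 4 * L * B * h <= eta).
{ apply Rle_trans with ((4 * L * B + 1) * (eta / (4 * L * B + 1))).
  - assert (h <= eta / (4 * L * B + 1)) by apply Rmin_r.
    assert (0 <= 4 * L * B * (eta / (4 * L * B + 1) - h)) by (apply Rmult_le_pos; lra).
    nra.
  - right; field; lra. }
exists h; split; [lra |]; intros t Ht.
rewrite expsum_expdq_coef by lra.
destruct (expdq_bounds h t Hh Ht) as [Hu Hut].
assert (Ht1 : Cmod (RtoC t) <= 1) by (rewrite Cmod_R, Rabs_right; lra).
destruct (Hlip _ _ Hu Ht1) as [Hdist Hbu].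
destruct (Hlip _ _ Ht1 Hu) as [_ Hbt].
rewrite hornerC_real in Hdist, Hbt.
replace (hornerR n c t ^ 2) with (Cmod (RtoC (hornerR n c t)) ^ 2)
  by (rewrite Cmod_R; apply pow2_abs).
assert (Hdist_h : Cmod (hornerC n c (expdq h t) - hornerR n c t)%C <= L * (2 * h))
  by (eapply Rle_trans; [exact Hdist | apply Rmult_le_compat_l; lra]).
pose proof (Cmod_ge_0 (hornerC n c (expdq h t))).
pose proof (Cmod_ge_0 (RtoC (hornerR n c t))).
eapply Rle_trans; [apply Cmod_sq_sub_le |].
apply Rle_trans with ((L * (2 * h)) * (2 * B)); [| nra].
apply Rmult_le_compat; [apply Cmod_ge_0 | lra | exact Hdist_h | lra].
Qed.

Lemma ex_derive_es_re n ar ai lam t : ex_derive (es_re n ar ai lam) t.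
Proof.
induction n as [|n IH]; unfold es_re in *; simpl.
- apply ex_derive_const.
- apply (ex_derive_plus (fun t => rsum n _)); [exact IH | auto_derive; auto].
Qed.

Lemma ex_derive_es_im n ar ai lam t : ex_derive (es_im n ar ai lam) t.
Proof.
induction n as [|n IH]; unfold es_im in *; simpl.
- apply ex_derive_const.
- apply (ex_derive_plus (fun t => rsum n _)); [exact IH | auto_derive; auto].
Qed.

Lemma ex_RInt_es_abs2 n ar ai lam a b : ex_RInt (es_abs2 n ar ai lam) a b.
Proof.
apply (@ex_RInt_continuous R_CompleteNormedModule); intros z _.
apply (@ex_derive_continuous R_AbsRing R_NormedModule).
pose proof (ex_derive_es_re n ar ai lam z); pose proof (ex_derive_es_im n ar ai lam z).
unfold es_abs2; auto_derive; auto.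
Qed.

Lemma Rabs_RInt_minus_le (f g : R -> R) a b G eta : a <= b ->
  ex_RInt f a b -> is_RInt g a b G ->
  (forall t, a <= t <= b -> Rabs (f t - g t) <= eta) ->
  Rabs (RInt f a b - G) <= (b - a) * eta.
Proof.
intros Hab Hf Hg Hfg.
rewrite <- (is_RInt_unique g a b G Hg).
replace (RInt f a b - RInt g a b) with (RInt (fun t => f t - g t) a b).
- apply abs_RInt_le_const; auto. apply (ex_RInt_minus f g); [exact Hf | exists G; exact Hg].
- apply (RInt_minus f g); [exact Hf | exists G; exact Hg].
Qed.

Lemma sqr_div_sqrt_gt_near N c : 0 < N -> c < N ->
  exists eta, 0 < eta /\ forall I, Rabs (I - N ^ 2) <= eta -> c < N ^ 2 / sqrt I.
Proof.
intros HN Hc.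
set (c1 := Rmax c (N / 2)).
assert (Hc1 : 0 < c1 < N /\ c <= c1).
{ unfold c1; split; [split |].
  - pose proof (Rmax_r c (N / 2)); lra.
  - apply Rmax_lub_lt; lra.
  - apply Rmax_l. }
set (M := N ^ 2 / c1).
assert (HM : c1 * M = N ^ 2) by (unfold M; field; lra).
assert (HNM : N < M) by (apply Rmult_lt_reg_l with c1; nra).
exists (Rmin (N ^ 2 / 2) ((M ^ 2 - N ^ 2) / 2)); split.
- apply Rmin_pos; nra.
- intros I HI. apply Rabs_le_between in HI.
  pose proof (Rmin_l (N ^ 2 / 2) ((M ^ 2 - N ^ 2) / 2)).
  pose proof (Rmin_r (N ^ 2 / 2) ((M ^ 2 - N ^ 2) / 2)).
  assert (HsI : 0 < sqrt I < M).
  { split; [apply sqrt_lt_R0; nra |].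
    rewrite <- (sqrt_pow2 M) by lra. apply sqrt_lt_1; nra. }
  apply Rle_lt_trans with c1; [lra |].
  apply Rmult_lt_reg_r with (sqrt I); [lra |].
  unfold Rdiv; rewrite Rmult_assoc, Rinv_l, Rmult_1_r by lra. nra.
Qed.

Theorem theorem2p6 (n : nat) (hn : (1 <= n)%nat) (c : R) (hc : c < INR n) :
  exists (ar ai lam : nat -> R),
    strictly_incr n lam /\ es_nonzero n ar ai lam /\
    exists pr : Riemann_integrable (es_abs2 n ar ai lam) 0 1,
      c < es_abs n ar ai lam 0 / sqrt (RiemannInt pr).
Proof.
destruct (HilbertInverse.hilbert_first_column n ltac:(lia)) as [cf [Hc0 Hhilb]].
assert (HN : 0 < INR n) by (apply lt_0_INR; lia).
assert (Hp2 : is_RInt (fun t => hornerR n cf t ^ 2) 0 1 (INR n ^ 2))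
  by (rewrite <- Hc0; apply is_RInt_hornerR_sq; [lia | exact Hhilb]).
destruct (sqr_div_sqrt_gt_near (INR n) c HN hc) as [eta [Heta Hratio]].
destruct (Cmod_expsum_expdq_coef_approx n cf eta Heta) as [h [Hh Happrox]].
set (a := expdq_coef h n cf).
assert (Ha0 : expsum n a (lam_step h) 0 = RtoC (INR n ^ 2)).
{ unfold a; rewrite expsum_expdq_coef, expdq_0, hornerC_real, hornerR_0, Hc0 by lia || lra.
  reflexivity. }
exists (fun j => fst (a j)), (fun j => snd (a j)), (lam_step h); split; [| split].
- intros i j Hij Hjn. apply Rmult_lt_compat_r; [lra | apply lt_INR; lia].
- exists 0; left. change (fst (expsum n a (lam_step h) 0) <> 0). rewrite Ha0; simpl. nra.
- exists (ex_RInt_Reals_0 _ _ _ (ex_RInt_es_abs2 n _ _ (lam_step h) 0 1)).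
  rewrite <- RInt_Reals.
  unfold es_abs; rewrite es_abs2_expsum, Ha0, Cmod_R, pow2_abs, sqrt_pow2 by nra.
  apply Hratio.
  eapply Rle_trans; [apply (Rabs_RInt_minus_le _ (fun t => hornerR n cf t ^ 2) 0 1 _ eta) | lra].
  + lra.
  + apply ex_RInt_es_abs2.
  + exact Hp2.
  + intros t Ht. rewrite es_abs2_expsum. apply Happrox, Ht.
Qed.
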